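(* Let $X$ be a set and let $\mathcal{L}\subset\mathcal{P}(X)$ be a nest (for every $M,N\in\mathcal{L}$, either $M\subset N$ or $N\subset M$). Suppose that for each $L\in\mathcal{L}$ there exists $\sup L$ with respect to $\trianglelefteq_{\mathcal{L}}$ and $\sup L\in X-L$. Then: 1. $L=X-\uparrow{k}$, where $k=\sup L$ with respect to $\triangleleft_{\mathcal{L}}$, for each $L\in\mathcal{L}$. 2. $\mathcal{T}_{\mathcal{L}}\subset\mathcal{T}_l$.
   Context: For a nest $\mathcal{L}$ on $X$, $x\triangleleft_{\mathcal{L}} y$ iff there exists $L\in\mathcal{L}$ with $x\in L$ and $y\notin L$; $\trianglelefteq_{\mathcal{L}}$ is its reflexive version. For $k\in X$, $\uparrow{k}$ is the set of $y\in X$ with $k\trianglelefteq_{\mathcal{L}} y$. $\mathcal{T}_{\mathcal{L}}$ is the topology on $X$ generated by $\mathcal{L}$ (as a subbase), and $\mathcal{T}_l$ is the lower topology on $X$, generated by the subbase $\{X-\uparrow{k}: k\in X\}$. *)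

From mathcomp Require Import all_boot.
From mathcomp Require Export boolp classical_sets.
Set Implicit Arguments. Unset Strict Implicit. Unset Printing Implicit Defensive.
Local Open Scope classical_set_scope.

Definition nest (T : Type) (L : set (set T)) : Prop :=
  forall M N, L M -> L N -> M `<=` N \/ N `<=` M.

Definition nest_lt (T : Type) (L : set (set T)) (x y : T) : Prop :=
  exists2 M, L M & M x /\ ~ M y.

Definition nest_le (T : Type) (L : set (set T)) (x y : T) : Prop :=
  x = y \/ nest_lt L x y.

Definition upset (T : Type) (L : set (set T)) (k : T) : set T :=
  [set y | nest_le L k y].

Definition is_sup (T : Type) (le : T -> T -> Prop) (A : set T) (k : T) : Prop :=
  (forall x, A x -> le x k) /\
  (forall u, (forall x, A x -> le x u) -> le k u).

Definition is_topology (T : Type) (tau : set (set T)) : Prop :=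
  tau setT /\
  (forall U V, tau U -> tau V -> tau (U `&` V)) /\
  (forall F : set (set T), F `<=` tau -> tau (\bigcup_(U in F) U)).

Definition generated_topology (T : Type) (S : set (set T)) : set (set T) :=
  [set U | forall tau, is_topology tau -> S `<=` tau -> tau U].

Definition lower_topology (T : Type) (L : set (set T)) : set (set T) :=
  generated_topology [set ~` upset L k | k in [set: T]].

From mathcomp Require Import all_boot boolp classical_sets.
Set Implicit Arguments.
Local Open Scope classical_set_scope.

(* In a nest the relation <| is asymmetric, so suprema for its reflexive
   version are unique.  If k = sup M lies outside M, every point of M is
   strictly below k, while every point outside M is an upper bound of M
   (M itself separates it from the points of M) and hence lies above k; so
   M = X - up k, and each subbasic open set of T_L is subbasic for T_l. *)

Lemma is_sup_unique (T : Type) (le : T -> T -> Prop) (A : set T) (k k' : T) :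
  (forall x y, le x y -> le y x -> x = y) ->
  is_sup le A k -> is_sup le A k' -> k = k'.
Proof. by move=> anti [ubk leastk] [ubk' leastk']; apply: anti; auto. Qed.

Lemma generated_topology_mono (T : Type) (S S' : set (set T)) :
  S `<=` S' -> generated_topology S `<=` generated_topology S'.
Proof.
by move=> SS' U SU tau tau_top S'tau; apply: SU => // V /SS'; apply: S'tau.
Qed.

Section Nest.
Variables (T : Type) (L : set (set T)).

Lemma nest_le_outside (M : set T) (x y : T) :
  L M -> M y -> ~ M x -> nest_le L y x.
Proof. by move=> LM My Mx; right; exists M. Qed.

Hypothesis nestL : nest L.

Lemma nest_lt_asym (x y : T) : nest_lt L x y -> ~ nest_lt L y x.
Proof.
move=> [M LM [Mx My]] [N LN [Ny Nx]].
by case: (nestL LM LN) => [/(_ x Mx)|/(_ y Ny)].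
Qed.

Lemma nest_le_anti (x y : T) : nest_le L x y -> nest_le L y x -> x = y.
Proof.
case=> [//|xy]; case=> [//|yx].
by case: (nest_lt_asym xy yx).
Qed.

Lemma sup_notin_eq_compl_upset (M : set T) (k : T) :
  L M -> is_sup (nest_le L) M k -> ~ M k -> M = ~` upset L k.
Proof.
move=> LM [ubk leastk] Mk; apply/seteqP; split=> x /=.
- by move=> Mx kx; apply: Mk; rewrite (nest_le_anti kx (ubk x Mx)).
- move=> kx; apply: contrapT => Mx; apply: kx.
  by apply: leastk => y My; apply: nest_le_outside Mx.
Qed.

End Nest.

Theorem proposition3p4 (T : Type) (L : set (set T)) :
  nest L ->
  (forall M, L M -> exists k, is_sup (nest_le L) M k /\ ~ M k) ->
  (forall M, L M -> forall k, is_sup (nest_le L) M k -> M = ~` upset L k) /\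
  generated_topology L `<=` lower_topology L.
Proof.
move=> nestL sup_notin.
have compl_upset M : L M -> forall k, is_sup (nest_le L) M k -> M = ~` upset L k.
  move=> LM k supk; have [k' [supk' Mk']] := sup_notin M LM.
  have -> : k = k' by apply: is_sup_unique supk supk'; exact: nest_le_anti.
  exact: sup_notin_eq_compl_upset.
split=> //; apply: generated_topology_mono => M LM.
have [k [supk _]] := sup_notin M LM.
by exists k => //; rewrite -(compl_upset M LM k supk).
Qed.
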